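(* Suppose there exist $c,d\in\mathbb{N}^+$ and $\gamma>0$ such that, as a function of $n$, $$\sup\left\{\frac{|f|_{\mathcal{C}}}{|f|_{\mathcal{U}^c}}: f\in H^n,\ |f|_{\mathcal{U}^c}\le n^d\right\}\notin O(n^{1+\gamma}).$$ Then there exist a language $L\in\mathbf{P}$ and $\tau>0$ such that no sequence of Boolean circuits $(C_n)_n$ with $C_n$ computing $L|_n$ for every $n$ has sizes $|C_n|\in O(n^{1+\tau})$.
   Context: Let $\mathcal{B}=\{0,1\}$, let $\mathcal{B}^*$ be the set of finite binary strings and $|h|$ the length of $h\in\mathcal{B}^*$. For $n\in\mathbb{N}^+$, $H^n$ is the set of all functions $\mathcal{B}^n\to\mathcal{B}$. An interpreter is a Turing machine computing a partial function $\varphi:\mathcal{B}^*\times\mathcal{B}^*\to\mathcal{B}\cup\{\bot\}$, where $\bot$ denotes non-halting (or invalid) output. For $f\in H^n$, $|f|_\varphi=\min\{|h|:\varphi(h,x)=f(x)\ \forall x\in\mathcal{B}^n\}$ ($+\infty$ if no such $h$). Turing machines have alphabet $\{0,1,b\}$ ($b$ blank), a finite state set containing an initial state and two final states accept/reject; the output is $1$ if halting in accept, $0$ if halting in reject, $\bot$ otherwise; multi-tape machines have read-only input tapes and read/write work tapes, and the transition function is a finite list of rules. $E(T)$ is a fixed prefix-free binary encoding of a machine $T$ listing its rules (of length at least 2 for every machine). For $c\in\mathbb{N}^+$, $\mathcal{U}^c$ is a time-bounded universal interpreter (a 2-input-tape, 3-work-tape machine): on $(p,x)$ with $n=|x|$,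 it checks within $n^c$ steps whether $p=E(T)u$ for a two-input-tape machine $T$ and $u\in\mathcal{B}^*$ (outputting $\bot$ if not, or if the check does not finish), then simulates $T$ on $(u,x)$ with an efficient universal simulation (Hennie–Stearns, overhead $O(t\log t)$ for $t$ simulated steps), devoting at most $n^c$ of its own steps to the simulation; it outputs $T$'s output if $T$ halts within this budget and $0$ otherwise. For fixed $p$ it runs in at most $\beta n^c$ steps for a constant $\beta$. A Boolean circuit on $n$ inputs is a DAG with a unique sink (output) whose sources are labelled by input indices in $\{1,\dots,n\}$ and whose other vertices (gates) are labelled AND, OR (two incoming edges) or NOT (one incoming edge); its size $|C|$ is its number of vertices. The circuit interpreter $\mathcal{C}$ reads a program $h=0^{\lceil\log_2 n\rceil}1\,[\text{binary expansion of } n]\,0^{|C|}1\,[\text{description of vertex } i]_{i=1}^{|C|}$, each vertex being described by its label and its parents/input index using $\max\{2\lceil\log_2|C|\rceil,\lceil\log_2 n\rceil\}$ bits beyond the label bits, so a circuit $C$ on $n$ inputs has encoding length $L(|C|,n)=2\lceil\log_2 n\rceil+2+|C|(3+\max\{2\lceil\log_2|C|\rceil,\lceil\log_2 n\rceil\})$; $\mathcal{C}(h,x)$ is the circuit's output on $x\in\mathcal{B}^n$, and $\bot$ if $h$ is malformed. Hence $|f|_{\mathcal{C}}=\min\{L(|C|,n): C \text{ computes } f\}$. A language is a subset $L\subseteq\mathcal{B}^*$, identified with its indicator function; $L|_n\in H^n$ is its restriction to inputs of length $n$. $\mathbf{P}$ is the class of languages decidable by a deterministic Turing machine in polynomial time.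 *)

From Stdlib Require Import Reals.
From mathcomp Require Import all_boot.

Set Implicit Arguments.
Unset Strict Implicit.
Unset Printing Implicit Defensive.

(* B^* = seq bool ; B^n = n.-tuple bool ; H^n = functions B^n -> B. *)
Definition Hn (n : nat) := n.-tuple bool -> bool.

(* An interpreter: partial function B^* x B^* -> B u {bot}; None = bot. *)
Definition interp := seq bool -> seq bool -> option bool.

Definition prog_for (phi : interp) (n : nat) (f : Hn n) (h : seq bool) : Prop :=
  forall x : n.-tuple bool, phi h (tval x) = Some (f x).

(* |f|_phi = k  (k is the minimal length of a phi-program for f).
   If f has no program (|f|_phi = +oo) no k satisfies this. *)
Definition prog_len (phi : interp) (n : nat) (f : Hn n) (k : nat) : Prop :=
  (exists h, size h = k /\ prog_for phi f h) /\
  (forall h, prog_for phi f h -> k <= size h).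

Definition language := seq bool -> bool.
Definition restrict (L : language) (n : nat) : Hn n := fun x => L (tval x).

(* Turing machines: alphabet {0,1,b} (Some false, Some true, None),     *)
(* m read-only input tapes, k read/write work tapes, states are nats,   *)
(* transition function given by a finite list of rules (first match).  *)

Definition sym := option bool.

Inductive move := MoveL | MoveR | Stay.

(* rule: (state, symbols read on the m+k tapes) ->
         (new state, symbols written on the k work tapes, m+k moves) *)
Record rule := Rule {
  r_state : nat; r_read : seq sym;
  r_next : nat; r_write : seq sym; r_moves : seq move }.

Record TM := mkTM {
  n_in : nat; n_work : nat;
  q_init : nat; q_acc : nat; q_rej : nat;
  rules : seq rule }.

Record config := Config {
  c_state : nat;
  c_inheads : seq nat;
  c_tapes : seq (nat -> sym);
  c_wheads : seq nat }.

Definition move_head (mv : move) (h : nat) : nat :=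
  match mv with MoveL => h.-1 | MoveR => h.+1 | Stay => h end.

Definition read_input (w : seq bool) (h : nat) : sym :=
  if h < size w then Some (nth false w h) else None.

Definition read_syms (T : TM) (inputs : seq (seq bool)) (c : config) : seq sym :=
  [seq read_input (nth [::] inputs i) (nth 0 (c_inheads c) i) | i <- iota 0 (n_in T)]
  ++ [seq nth (fun _ => None) (c_tapes c) j (nth 0 (c_wheads c) j) | j <- iota 0 (n_work T)].

Definition halted (T : TM) (c : config) : bool :=
  (c_state c == q_acc T) || (c_state c == q_rej T).

(* One step. Final states and configurations with no applicable rule
   do not change (the latter thus never halt: output bot). *)
Definition step (T : TM) (inputs : seq (seq bool)) (c : config) : config :=
  if halted T c then c else
  let s := read_syms T inputs c in
  match [seq r <- rules T | (r_state r == c_state c) && (r_read r == s)] with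
  | [::] => c
  | r :: _ =>
    Config (r_next r)
      [seq move_head (nth Stay (r_moves r) i) (nth 0 (c_inheads c) i) | i <- iota 0 (n_in T)]
      [seq (fun p => if p == nth 0 (c_wheads c) j then nth None (r_write r) j
                     else nth (fun _ => None) (c_tapes c) j p) | j <- iota 0 (n_work T)]
      [seq move_head (nth Stay (r_moves r) (n_in T + j)) (nth 0 (c_wheads c) j)
         | j <- iota 0 (n_work T)]
  end.

Definition init_config (T : TM) : config :=
  Config (q_init T) (nseq (n_in T) 0) (nseq (n_work T) (fun _ => None)) (nseq (n_work T) 0).

Definition run (T : TM) (inputs : seq (seq bool)) (t : nat) : config :=
  iter t (step T inputs) (init_config T).

Definition halts_within (T : TM) (inputs : seq (seq bool)) (t : nat) : bool :=
  halted T (run T inputs t).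

Definition accepts_within (T : TM) (inputs : seq (seq bool)) (t : nat) : bool :=
  c_state (run T inputs t) == q_acc T.

Definition inP (L : language) : Prop :=
  exists T : TM, n_in T = 1 /\
  exists a k : nat, forall w : seq bool,
    exists t, t <= a * (size w) ^ k + a /\ halts_within T [:: w] t /\
              (accepts_within T [:: w] t = L w).

(* E: fixed prefix-free encoding of (two-input-tape) machines, |E(T)| >= 2 *)
Definition machine_encoding (E : TM -> seq bool) : Prop :=
  (forall T, 2 <= size (E T)) /\
  (forall T T' u, n_in T = 2 -> n_in T' = 2 -> E T' = E T ++ u -> T' = T /\ u = [::]).

(* output of T on (u,x) when its run is cut after t steps: 1 if it has
   accepted, 0 otherwise (rejected, or did not halt within the budget) *)
Definition budget_output (T : TM) (u x : seq bool) (t : nat) : bool :=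
  accepts_within T [:: u; x] t.

(* Specification of U^c (for this c and encoding E):
   - outputs bot unless p = E(T)u for a two-input-tape machine T;
   - if p = E(T)u it outputs bot (check not finished in n^c steps) or
     the budget-limited output of T on (u,x), with at most n^c simulated steps;
   - it is computed (1 = accept) by a 2-input-tape, 3-work-tape machine that
     always halts within beta*n^c (+beta) steps. *)
Definition universal_interp (E : TM -> seq bool) (c : nat) (U : interp) : Prop :=
  (forall p x, (forall T u, n_in T = 2 -> p <> E T ++ u) -> U p x = None) /\
  (forall T u x, n_in T = 2 ->
     U (E T ++ u) x = None \/
     exists t, t <= (size x) ^ c /\ U (E T ++ u) x = Some (budget_output T u x t)) /\
  (exists M : TM, n_in M = 2 /\ n_work M = 3 /\
   exists beta : nat, forall p x,
     exists t, t <= beta * (size x) ^ c + beta /\ halts_within M [:: p; x] t /\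
       (accepts_within M [:: p; x] t <-> U p x = Some true)).

(* Boolean circuits (DAG in topological order, last vertex = sink).    *)

(* vertex labels; parents are referred to by their (earlier) position *)
Inductive gate :=
  | GIn of nat          (* source labelled with input index (0-based) *)
  | GAnd of nat & nat
  | GOr of nat & nat
  | GNot of nat.

Definition circuit := seq gate.

Definition parents (g : gate) : seq nat :=
  match g with
  | GIn _ => [::] | GAnd a b => [:: a; b] | GOr a b => [:: a; b] | GNot a => [:: a]
  end.

(* well-formed circuit on n inputs: nonempty, labels/parents valid (AND/OR
   have two distinct parents, edges go forward, so it is a DAG), and the
   last vertex is the unique sink (every other vertex has a child). *)
Definition wf_circuit (n : nat) (C : circuit) : Prop :=
  0 < size C /\
  (forall i, i < size C ->
     match nth (GIn 0) C i with
     | GIn j => j < n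
     | GAnd a b => [&& a < i, b < i & a != b]
     | GOr a b => [&& a < i, b < i & a != b]
     | GNot a => a < i
     end) /\
  (forall i, i.+1 < size C -> exists j, i < j < size C /\ i \in parents (nth (GIn 0) C j)).

Definition eval_gate (x : seq bool) (vals : seq bool) (g : gate) : bool :=
  match g with
  | GIn j => nth false x j
  | GAnd a b => nth false vals a && nth false vals b
  | GOr a b => nth false vals a || nth false vals b
  | GNot a => ~~ nth false vals a
  end.

Definition eval_all (C : circuit) (x : seq bool) : seq bool :=
  foldl (fun vals g => rcons vals (eval_gate x vals g)) [::] C.

Definition eval_circuit (C : circuit) (x : seq bool) : bool :=
  last false (eval_all C x).

Definition circ_size (C : circuit) : nat := size C.

Definition circ_computes (n : nat) (C : circuit) (f : Hn n) : Prop :=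
  wf_circuit n C /\ forall x : n.-tuple bool, eval_circuit C (tval x) = f x.

(* encoding length L(|C|, n); up_log 2 m = ceil(log2 m) for m >= 1 *)
Definition circ_enc_len (s n : nat) : nat :=
  2 * up_log 2 n + 2 + s * (3 + maxn (2 * up_log 2 s) (up_log 2 n)).

Definition circ_len (n : nat) (f : Hn n) (k : nat) : Prop :=
  (exists C, circ_computes C f /\ circ_enc_len (circ_size C) n = k) /\
  (forall C, circ_computes C f -> k <= circ_enc_len (circ_size C) n).

Definition ratio_sup_bigO (U : interp) (d : nat) (g : R) : Prop :=
  exists K : R, exists N : nat, forall n, N <= n -> 0 < n ->
    forall (f : Hn n) (ku kc : nat),
      prog_len U f ku -> ku <= n ^ d -> circ_len f kc ->
      Rle (Rdiv (INR kc) (INR ku)) (Rmult K (Rpower (INR n) (Rplus R1 g))).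

Definition sizes_bigO (C : nat -> circuit) (tau : R) : Prop :=
  exists K : R, exists N : nat, forall n, N <= n ->
    Rle (INR (circ_size (C n))) (Rmult K (Rpower (INR n) (Rplus R1 tau))).

From Stdlib Require Import Reals Lra FunctionalExtensionality.
From mathcomp Require Import all_boot zify.
Set Implicit Arguments. Unset Strict Implicit. Unset Printing Implicit Defensive.

(* Small circuits for an easy language make every function cheap to encode.

   Let M be the machine computing U^c in time beta*|x|^c.  The language used is
   the pair language of U^c: the words 1p_1...1p_k 0 x such that U^c(p, x) = 1.
   1. It is in P: a single-input machine first decodes its input onto two work
      tapes (a prelude of at most 3|w|+5 steps) and then runs M step by step
      ([sim_machine], [pair_language_inP]).
   2. If it had circuits C_m of size O(m^(1+tau)), fix f on n inputs with a
      U^c-program p, |p| = ku <= n^d: hardwiring the prefix 1p_1...1p_k 0 into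
      C_m, m = 2ku+1+n, gives a circuit for f with |C_m| + 6 vertices
      ([hardwire], [hardwire_computes]).
   3. Its encoding length is |C_m| log(|C_m| + n) = O(m^(1+3 tau)), and with
      tau = min(gamma,1)/(3(d+1)) and m <= 4 ku n this is O(ku * n^(1+gamma))
      ([hardwired_ratio_bound]), so the ratio |f|_C / |f|_{U^c} would be
      O(n^(1+gamma)), contradicting the hypothesis. *)

(* A pair (p, x) is sent to the single string 1p_1 1p_2 ... 1p_k 0 x, i.e. to
   [pair_prefix p ++ x]. *)
Definition pair_prefix (p : seq bool) : seq bool :=
  flatten [seq [:: true; b] | b <- p] ++ [:: false].

(* The inverse of the pair encoding, total on all strings: it reads blocks 1b until
   it meets a 0 (or the end of the string, or a lone trailing 1). *)
Fixpoint unpair (w : seq bool) : seq bool * seq bool :=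
  match w with
  | [::] => ([::], [::])
  | false :: x => ([::], x)
  | [:: true] => ([::], [::])
  | true :: b :: r => (b :: (unpair r).1, (unpair r).2)
  end.

Lemma unpair_prefix p x : unpair (pair_prefix p ++ x) = (p, x).
Proof. by elim: p => //= b p ->. Qed.

Lemma size_pair_prefix p : size (pair_prefix p) = ((size p).*2 + 1)%N.
Proof.
rewrite size_cat /=; congr (_ + 1)%N.
by elim: p => //= b p ->; rewrite doubleS.
Qed.

Lemma seq_ind2 (P : seq bool -> Prop) :
  P [::] -> (forall r, P (false :: r)) -> P [:: true] ->
  (forall b r, P r -> P [:: true, b & r]) -> forall w, P w.
Proof.
move=> H0 HF HT HS w; have [n Hn] : exists n, (size w <= n)%N by exists (size w).
elim: n w Hn => [|n IH] [|[] [|b r]] //= Hn; apply: HS; apply: IH; lia.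
Qed.

Lemma size_unpair w : ((size (unpair w).1).*2 + size (unpair w).2 <= size w)%N.
Proof. elim/seq_ind2: w => //= [r|b r IH]; lia. Qed.

(* Given a 2-input, 3-work-tape
   machine M, it has one input tape and six work tapes A, B, W0, W1, W2, Cnt.
   States 0-5 form a prelude that decodes the input w into (unpair w): p is
   copied on A, x on B, and the heads are rewound using the marker that state 0
   writes at cell 0 of Cnt.  Then every state q of M is run as state q+6, with
   A, B playing the input tapes of M and W0-W2 its work tapes. *)

Definition blank_tape : nat -> sym := fun _ => None.
Definition tape_of (a : seq bool) : nat -> sym := fun p => read_input a p.
Definition marker_tape : nat -> sym := fun p => if p == 0 then Some false else None.

(* Rules are matched on the exact vector of the seven scanned symbols, so the
   prelude is listed on every vector of length 7. *)
Definition all_syms : seq sym := [:: None; Some false; Some true].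
Fixpoint sym_vectors (n : nat) : seq (seq sym) :=
  match n with
  | 0 => [:: [::]]
  | n.+1 => [seq a :: v | a <- all_syms, v <- sym_vectors n]
  end.

(* Locked, so that simplification never unfolds the 3^7 vectors. *)
Fact sym_vectors7_key : unit. Proof. exact: tt. Qed.
Definition sym_vectors7 : seq (seq sym) := locked_with sym_vectors7_key (sym_vectors 7).

Definition stay7 : seq move := [:: Stay; Stay; Stay; Stay; Stay; Stay; Stay].

(* Prelude transition on state s and scanned vector v = (In,A,B,W0,W1,W2,Cnt):
   0: mark Cnt;  1: read a tag bit (1 = a bit of p follows, else p is over);
   2: copy a bit of p on A;  3: rewind A and Cnt;  4: copy the rest (x) on B;
   5: rewind B and Cnt, then enter the initial state of M. *)
Definition prelude_delta (qi s : nat) (v : seq sym) : nat * seq sym * seq move :=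
  let I := nth None v 0 in let A := nth None v 1 in let B := nth None v 2 in
  let W0 := nth None v 3 in let W1 := nth None v 4 in let W2 := nth None v 5 in
  let C := nth None v 6 in
  let same := [:: A; B; W0; W1; W2; C] in
  match s with
  | 0 => (1, [:: A; B; W0; W1; W2; Some false], stay7)
  | 1 => match I with
         | Some true => (2, same, [:: MoveR; Stay; Stay; Stay; Stay; Stay; Stay])
         | Some false => (3, same, [:: MoveR; Stay; Stay; Stay; Stay; Stay; Stay])
         | None => (3, same, stay7) end
  | 2 => match I with
         | Some b => (1, [:: Some b; B; W0; W1; W2; C],
                      [:: MoveR; MoveR; Stay; Stay; Stay; Stay; MoveR])
         | None => (3, same, stay7) end
  | 3 => match C with
         | Some false => (4, same, stay7)
         | _ => (3, same, [:: Stay; MoveL; Stay; Stay; Stay; Stay; MoveL]) end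
  | 4 => match I with
         | Some b => (4, [:: A; Some b; W0; W1; W2; C],
                      [:: MoveR; Stay; MoveR; Stay; Stay; Stay; MoveR])
         | None => (5, same, stay7) end
  | _ => match C with
         | Some false => (qi.+4.+2, same, stay7)
         | _ => (5, same, [:: Stay; Stay; MoveL; Stay; Stay; Stay; MoveL]) end
  end.

Definition prelude_rule (qi s : nat) (v : seq sym) : rule :=
  Rule s v (prelude_delta qi s v).1.1 (prelude_delta qi s v).1.2 (prelude_delta qi s v).2.

(* A rule of M, relocated to states q+6: the input head of the simulator sits
   on a blank, A and B are rewritten with what they hold, and Cnt stays on its
   marker. *)
Definition lift_rule (r : rule) : rule :=
  Rule (r_state r).+4.+2 (None :: r_read r ++ [:: Some false]) (r_next r).+4.+2
    [:: nth None (r_read r) 0; nth None (r_read r) 1; nth None (r_write r) 0;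
        nth None (r_write r) 1; nth None (r_write r) 2; Some false]
    [:: Stay; nth Stay (r_moves r) 0; nth Stay (r_moves r) 1; nth Stay (r_moves r) 2;
        nth Stay (r_moves r) 3; nth Stay (r_moves r) 4; Stay].

Definition sim_rules (M : TM) : seq rule :=
  flatten [seq [seq prelude_rule (q_init M) s v | v <- sym_vectors7] | s <- iota 0 6]
  ++ map lift_rule (rules M).

Definition sim_machine (M : TM) : TM :=
  mkTM 1 6 0 (q_acc M).+4.+2 (q_rej M).+4.+2 (sim_rules M).

(* Rule lookup: the prelude has exactly one rule per (state, scanned vector),
   and no lifted rule of M lives in a prelude state. *)
Lemma filter_eq_head (T : eqType) (v : T) (l : seq T) :
  v \in l -> exists rest, [seq x <- l | x == v] = v :: rest.
Proof.
elim: l => //= a l IH; rewrite in_cons.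
case: (a =P v) => [->|Ha]; first by eexists.
rewrite (_ : (v == a) = false); last by apply/eqP => E; apply: Ha.
exact: IH.
Qed.

Lemma mem_sym_vectors7 v : size v = 7 -> v \in sym_vectors7.
Proof.
rewrite /sym_vectors7 unlock; elim: 7 v => [|n IH] [|a v] //= [Hs].
have Ha : a \in all_syms by case: a => [[]|].
exact: (allpairs_f (fun a v => a :: v) Ha (IH _ Hs)).
Qed.

Lemma filter_prelude_rules qi s' s v l :
  [seq r <- map (prelude_rule qi s') l | (r_state r == s) && (r_read r == v)] =
  if s' == s then map (prelude_rule qi s) [seq v' <- l | v' == v] else [::].
Proof. elim: l => [|a l IH] /=; [by case: ifP | rewrite IH; case: eqP => [->|] //=; by case: eqP]. Qed.

Lemma filter_lift_rules_prelude l s v : s < 6 ->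
  [seq r <- map lift_rule l | (r_state r == s) && (r_read r == v)] = [::].
Proof.
move=> Hs; elim: l => //= a l ->.
by rewrite (_ : ((r_state a).+4.+2 == s) = false) //; apply/negbTE; apply: contraTneq Hs => <-.
Qed.

Lemma step_prelude M inp c : c_state c < 6 ->
  step (sim_machine M) inp c =
  let v := read_syms (sim_machine M) inp c in let d := prelude_delta (q_init M) (c_state c) v in
  Config d.1.1
    [seq move_head (nth Stay d.2 i) (nth 0 (c_inheads c) i) | i <- iota 0 1]
    [seq (fun p => if p == nth 0 (c_wheads c) j then nth None d.1.2 j
                   else nth (fun _ => None) (c_tapes c) j p) | j <- iota 0 6]
    [seq move_head (nth Stay d.2 (1 + j)) (nth 0 (c_wheads c) j) | j <- iota 0 6].
Proof.
move=> Hs.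
have Hh : halted (sim_machine M) c = false.
  by rewrite /halted /=; apply/negbTE; rewrite negb_or; apply/andP; split; apply: contraTneq Hs => ->.
rewrite /step Hh.
set v := read_syms (sim_machine M) inp c.
have Hv : size v = 7 by rewrite /v /read_syms size_cat !size_map !size_iota.
have [rest Hr] := filter_eq_head (mem_sym_vectors7 Hv).
rewrite /sim_rules filter_cat filter_lift_rules_prelude // cats0 filter_flatten -map_comp.
rewrite (eq_map (fun s' => filter_prelude_rules (q_init M) s' (c_state c) v sym_vectors7)).
move: (c_state c) Hs => s Hs.
suff -> : flatten [seq (if s' == s then [seq prelude_rule (q_init M) s i
                                         | i <- [seq v' <- sym_vectors7 | v' == v]] else [::])
                  | s' <- iota 0 6]
  = [seq prelude_rule (q_init M) s i | i <- [seq v' <- sym_vectors7 | v' == v]] by rewrite Hr.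
by move: s Hs {Hr} => [|[|[|[|[|[|s]]]]]] //= _; rewrite ?cats0.
Qed.

Arguments tape_of : simpl never.
Arguments marker_tape : simpl never.
Arguments blank_tape : simpl never.
Arguments read_input : simpl never.

Definition prelude_config (s i : nat) (a b : seq bool) (ha hb hc : nat) : config :=
  Config s [:: i] [:: tape_of a; tape_of b; blank_tape; blank_tape; blank_tape; marker_tape]
    [:: ha; hb; 0; 0; 0; hc].

Lemma write_same (t : nat -> sym) h : (fun p => if p == h then t h else t p) = t.
Proof. by apply: functional_extensionality => p; case: eqP => [->|]. Qed.

Lemma write_rcons a b : (fun p => if p == size a then Some b else tape_of a p) = tape_of (rcons a b).
Proof.
apply: functional_extensionality => p; rewrite /tape_of /read_input size_rcons nth_rcons.
case: (ltngtP p (size a)) => Hp; [by rewrite ltnS ltnW | by rewrite ltnS leqNgt Hp | by rewrite Hp ltnSn].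
Qed.

Section PreludeSteps.
Variables (M : TM) (w : seq bool).
Local Notation step1 := (step (sim_machine M) [:: w]).

Lemma step_mark : step1 (init_config (sim_machine M)) = prelude_config 1 0 [::] [::] 0 0 0.
Proof.
rewrite step_prelude //= /prelude_config; congr Config.
have -> : blank_tape = tape_of [::] by apply: functional_extensionality => p; rewrite /tape_of /read_input.
congr [:: _; _; _; _; _; _]; apply: functional_extensionality => p;
  rewrite /blank_tape /marker_tape //; by case: eqP.
Qed.

Lemma step_tag_one i a b ha hb hc : read_input w i = Some true ->
  step1 (prelude_config 1 i a b ha hb hc) = prelude_config 2 i.+1 a b ha hb hc.
Proof. by move=> H; rewrite step_prelude //= H /= !write_same. Qed.
Lemma step_tag_zero i a b ha hb hc : read_input w i = Some false ->
  step1 (prelude_config 1 i a b ha hb hc) = prelude_config 3 i.+1 a b ha hb hc.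
Proof. by move=> H; rewrite step_prelude //= H /= !write_same. Qed.
Lemma step_tag_end i a b ha hb hc : read_input w i = None ->
  step1 (prelude_config 1 i a b ha hb hc) = prelude_config 3 i a b ha hb hc.
Proof. by move=> H; rewrite step_prelude //= H /= !write_same. Qed.
Lemma step_copy_bit i a b hb x : read_input w i = Some x ->
  step1 (prelude_config 2 i a b (size a) hb (size a)) =
  prelude_config 1 i.+1 (rcons a x) b (size a).+1 hb (size a).+1.
Proof. by move=> H; rewrite step_prelude //= H /= !write_same write_rcons. Qed.
Lemma step_copy_end i a b ha hb hc : read_input w i = None ->
  step1 (prelude_config 2 i a b ha hb hc) = prelude_config 3 i a b ha hb hc.
Proof. by move=> H; rewrite step_prelude //= H /= !write_same. Qed.
Lemma step_rewindA_done i a b ha hb :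
  step1 (prelude_config 3 i a b ha hb 0) = prelude_config 4 i a b ha hb 0.
Proof. by rewrite step_prelude //= !write_same. Qed.
Lemma step_rewindA i a b ha hb k :
  step1 (prelude_config 3 i a b ha hb k.+1) = prelude_config 3 i a b ha.-1 hb k.
Proof. by rewrite step_prelude //= !write_same. Qed.
Lemma step_copyB_bit i a b ha x : read_input w i = Some x ->
  step1 (prelude_config 4 i a b ha (size b) (size b)) =
  prelude_config 4 i.+1 a (rcons b x) ha (size b).+1 (size b).+1.
Proof. by move=> H; rewrite step_prelude //= H /= !write_same write_rcons. Qed.
Lemma step_copyB_end i a b ha hb hc : read_input w i = None ->
  step1 (prelude_config 4 i a b ha hb hc) = prelude_config 5 i a b ha hb hc.
Proof. by move=> H; rewrite step_prelude //= H /= !write_same. Qed.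
Lemma step_rewindB_done i a b ha hb :
  step1 (prelude_config 5 i a b ha hb 0) =
  Config (q_init M).+4.+2 [:: i]
    [:: tape_of a; tape_of b; blank_tape; blank_tape; blank_tape; marker_tape] [:: ha; hb; 0; 0; 0; 0].
Proof. by rewrite step_prelude //= !write_same. Qed.
Lemma step_rewindB i a b ha hb k :
  step1 (prelude_config 5 i a b ha hb k.+1) = prelude_config 5 i a b ha hb.-1 k.
Proof. by rewrite step_prelude //= !write_same. Qed.

End PreludeSteps.

(* Reading the encoded program p from a suffix r of the input takes
   [tag_steps r] steps and consumes [tag_len r] input cells. *)
Fixpoint tag_steps (r : seq bool) : nat :=
  match r with
  | [::] => 1 | false :: _ => 1 | [:: true] => 2 | true :: _ :: r => (tag_steps r).+2 end.
Fixpoint tag_len (r : seq bool) : nat :=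
  match r with
  | [::] => 0 | false :: _ => 1 | [:: true] => 1 | true :: _ :: r => (tag_len r).+2 end.

Lemma tag_steps_le w : tag_steps w <= (size w).+1.
Proof. by elim/seq_ind2: w => //= b r; rewrite !ltnS; apply: leqW. Qed.

Lemma read_input_end w i : drop i w = [::] -> read_input w i = None.
Proof.
move=> H; rewrite /read_input; have := size_drop i w; rewrite H /= => /eqP.
by rewrite eq_sym subn_eq0 => /leq_gtF ->.
Qed.

Lemma read_input_drop w i b r : drop i w = b :: r -> read_input w i = Some b /\ drop i.+1 w = r.
Proof.
move=> H; split.
- have Hs := size_drop i w; rewrite H /= in Hs.
  have Hi : i < size w by rewrite -subn_gt0 -Hs.
  by have := nth_drop i false w 0; rewrite H addn0 /= /read_input Hi => <-.
- by have := drop_drop w 1 i; rewrite H add1n /= drop0 => <-.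
Qed.

Lemma tag_len_drop w r i : drop i w = r -> drop (i + tag_len r) w = (unpair r).2.
Proof.
elim/seq_ind2: r i => [|r|| b r IH] i Hd /=; first by rewrite addn0.
- by have [_ H] := read_input_drop Hd; rewrite addn1 H.
- by have [_ H] := read_input_drop Hd; rewrite addn1 H.
- have [_ H2] := read_input_drop Hd; have [_ H4] := read_input_drop H2.
  by rewrite -(IH _ H4) !addnS !addSn.
Qed.

Section PreludeRuns.
Variables (M : TM) (w : seq bool).
Local Notation step1 := (step (sim_machine M) [:: w]).

Lemma copy_prog_run r a i : drop i w = r ->
  iter (tag_steps r) step1 (prelude_config 1 i a [::] (size a) 0 (size a)) =
  prelude_config 3 (i + tag_len r) (a ++ (unpair r).1) [::]
    (size (a ++ (unpair r).1)) 0 (size (a ++ (unpair r).1)).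
Proof.
elim/seq_ind2: r a i => [|r|| b r IH] a i Hd.
- by rewrite /= step_tag_end ?read_input_end // addn0 cats0.
- by have [H1 _] := read_input_drop Hd; rewrite /= step_tag_zero // addn1 cats0.
- have [H1 H2] := read_input_drop Hd.
  by rewrite /= step_tag_one // step_copy_end ?read_input_end // addn1 cats0.
- have [H1 H2] := read_input_drop Hd; have [H3 H4] := read_input_drop H2.
  rewrite [tag_steps _]/= !iterSr step_tag_one //; erewrite step_copy_bit; last exact: H3.
  rewrite [tag_len _]/= [unpair _]/=.
  have := IH (rcons a b) i.+2 H4; rewrite size_rcons => ->.
  by rewrite cat_rcons /= !addnS !addSn.
Qed.

Lemma rewindA_run i a b hb k :
  iter k.+1 step1 (prelude_config 3 i a b k hb k) = prelude_config 4 i a b 0 hb 0.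
Proof. by elim: k => [|k IH]; [rewrite /= step_rewindA_done | rewrite iterSr step_rewindA]. Qed.

Lemma copy_arg_run a ha r b i : drop i w = r ->
  iter (size r).+1 step1 (prelude_config 4 i a b ha (size b) (size b)) =
  prelude_config 5 (i + size r) a (b ++ r) ha (size (b ++ r)) (size (b ++ r)).
Proof.
elim: r b i => [|x r IH] b i Hd; first by rewrite /= step_copyB_end ?read_input_end // addn0 cats0.
have [H1 H2] := read_input_drop Hd.
rewrite iterSr; erewrite step_copyB_bit; last exact: H1.
by rewrite -(size_rcons b x) IH // cat_rcons addSnnS.
Qed.

Lemma rewindB_run i a b ha k :
  iter k.+1 step1 (prelude_config 5 i a b ha k k) =
  Config (q_init M).+4.+2 [:: i]
    [:: tape_of a; tape_of b; blank_tape; blank_tape; blank_tape; marker_tape] [:: ha; 0; 0; 0; 0; 0].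
Proof. by elim: k => [|k IH]; [rewrite /= step_rewindB_done | rewrite iterSr step_rewindB]. Qed.

End PreludeRuns.

Definition prelude_steps (w : seq bool) : nat :=
  (size (unpair w).2).+1 + ((size (unpair w).2).+1 + ((size (unpair w).1).+1 + (tag_steps w + 1))).

Lemma prelude_steps_le w : prelude_steps w <= 3 * size w + 5.
Proof. by have := size_unpair w; have := tag_steps_le w; rewrite /prelude_steps; lia. Qed.

Lemma prelude_run M w :
  run (sim_machine M) [:: w] (prelude_steps w) =
  Config (q_init M).+4.+2 [:: tag_len w + size (unpair w).2]
    [:: tape_of (unpair w).1; tape_of (unpair w).2; blank_tape; blank_tape; blank_tape; marker_tape]
    [:: 0; 0; 0; 0; 0; 0].
Proof.
rewrite /run /prelude_steps !iterD [iter 1 _ _]/= step_mark.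
have := copy_prog_run M [::] (drop0 w); rewrite add0n cat0s => ->.
rewrite rewindA_run.
have Hx := tag_len_drop (drop0 w); rewrite add0n in Hx.
by have := copy_arg_run M (unpair w).1 0 [::] Hx; rewrite cat0s => ->; rewrite rewindB_run.
Qed.

Lemma prelude_head_past w : size w <= tag_len w + size (unpair w).2.
Proof. by have := tag_len_drop (drop0 w); rewrite add0n => <-; rewrite size_drop; lia. Qed.

(* The simulator's configuration mirroring a configuration c of M on inputs
   (a, x), with its own input head parked at j. *)
Definition sim_config (j : nat) (a x : seq bool) (c : config) : config :=
  Config (c_state c).+4.+2 [:: j]
    [:: tape_of a; tape_of x; nth blank_tape (c_tapes c) 0; nth blank_tape (c_tapes c) 1;
        nth blank_tape (c_tapes c) 2; marker_tape]
    [:: nth 0 (c_inheads c) 0; nth 0 (c_inheads c) 1; nth 0 (c_wheads c) 0;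
        nth 0 (c_wheads c) 1; nth 0 (c_wheads c) 2; 0].

Section Simulation.
Variables (M : TM) (w : seq bool) (j : nat) (a x : seq bool).
Hypotheses (HMin : n_in M = 2) (HMwork : n_work M = 3) (Hj : size w <= j).

(* In a simulated configuration the simulator scans a blank, M's symbols,
   and the marker; the only applicable rule is the lift of M's rule. *)
Lemma read_syms_sim c :
  read_syms (sim_machine M) [:: w] (sim_config j a x c) =
  None :: read_syms M [:: a; x] c ++ [:: Some false].
Proof. by rewrite /read_syms HMin HMwork /= /read_input ltnNge Hj. Qed.

Lemma filter_prelude_rules_sim s v :
  [seq r <- flatten [seq [seq prelude_rule (q_init M) s' v0 | v0 <- sym_vectors7] | s' <- iota 0 6]
     | (r_state r == s.+4.+2) && (r_read r == v)] = [::].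
Proof.
rewrite filter_flatten -map_comp.
by rewrite (eq_map (fun s' => filter_prelude_rules (q_init M) s' s.+4.+2 v sym_vectors7)).
Qed.

Lemma filter_lift_rules l s v :
  [seq r <- map lift_rule l | (r_state r == s.+4.+2) && (r_read r == None :: v ++ [:: Some false])] =
  map lift_rule [seq r <- l | (r_state r == s) && (r_read r == v)].
Proof.
elim: l => //= r l ->.
by rewrite !eqSS eqseq_cons /= !cats1 eqseq_rcons eqxx andbT; case: ifP.
Qed.

Lemma step_sim c : step (sim_machine M) [:: w] (sim_config j a x c) = sim_config j a x (step M [:: a; x] c).
Proof.
rewrite /step (_ : halted (sim_machine M) _ = halted M c) //; case: (halted M c) => //.
rewrite read_syms_sim /= /sim_rules filter_cat filter_prelude_rules_sim filter_lift_rules.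
set RM := read_syms M [:: a; x] c.
case E: [seq r <- rules M | (r_state r == c_state c) && (r_read r == RM)] => [|r rest] //=.
have := filter_all (fun r => (r_state r == c_state c) && (r_read r == RM)) (rules M).
rewrite E /= => /andP [/andP [_ /eqP ->] _].
rewrite /RM /read_syms HMin HMwork /sim_config /= !(write_same (tape_of _)).
rewrite (_ : (fun p => if p == 0 then Some false else marker_tape p) = marker_tape) //.
by apply: functional_extensionality => p; case: eqP => [->|].
Qed.

Lemma iter_sim c k :
  iter k (step (sim_machine M) [:: w]) (sim_config j a x c) = sim_config j a x (iter k (step M [:: a; x]) c).
Proof. by elim: k => //= k ->; exact: step_sim. Qed.

End Simulation.

Lemma run_sim_machine M w k : n_in M = 2 -> n_work M = 3 ->
  run (sim_machine M) [:: w] (k + prelude_steps w) =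
  sim_config (tag_len w + size (unpair w).2) (unpair w).1 (unpair w).2
    (run M [:: (unpair w).1; (unpair w).2] k).
Proof.
move=> HMin HMwork; rewrite /run iterD -/(run _ _ (prelude_steps w)) prelude_run.
rewrite (_ : Config _ _ _ _ = sim_config (tag_len w + size (unpair w).2) (unpair w).1 (unpair w).2
                               (init_config M)); last by rewrite /sim_config /init_config /= HMin HMwork.
by rewrite iter_sim // prelude_head_past.
Qed.

Definition pair_language (U : interp) : language :=
  fun w => U (unpair w).1 (unpair w).2 == Some true.

Lemma run_halted M inp t t' : halted M (run M inp t) -> t <= t' -> run M inp t' = run M inp t.
Proof.
move=> H Ht; rewrite /run -(subnK Ht) iterD -/(run M inp t).
by elim: (t' - t) => //= k ->; rewrite /step H.
Qed.

(* If U is computed by a 2-input, 3-work-tape machine in time beta*|x|^c + beta,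
   its pair language is decided by the simulator within (beta+8)*|w|^c + (beta+8)
   steps: 3|w|+5 for the prelude and beta*|x|^c + beta for the simulation. *)
Lemma pair_language_inP (U : interp) M beta c : n_in M = 2 -> n_work M = 3 -> 0 < c ->
  (forall p x, exists t, t <= beta * size x ^ c + beta /\ halts_within M [:: p; x] t /\
       (accepts_within M [:: p; x] t <-> U p x = Some true)) ->
  inP (pair_language U).
Proof.
move=> HMin HMwork Hc HM; exists (sim_machine M); split => //.
exists (beta + 8), c => w; set T := ((beta + 8) * size w ^ c + (beta + 8))%N.
exists T; split => //.
have [t [Ht [Hh Ha]]] := HM (unpair w).1 (unpair w).2.
have Hw := size_unpair w; have HP := prelude_steps_le w.
have Hxw : size (unpair w).2 ^ c <= size w ^ c by rewrite leq_exp2r //; lia.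
have Hwc : size w <= size w ^ c by case: (size w) => // s; rewrite -{1}(expn1 s.+1) leq_pexp2l.
have HbX : beta * size (unpair w).2 ^ c <= beta * size w ^ c by apply: leq_mul.
have HT : T = (T - prelude_steps w) + prelude_steps w by rewrite subnK // /T; nia.
have Htk : t <= T - prelude_steps w by rewrite /T; nia.
have Erun : run (sim_machine M) [:: w] T =
  sim_config (tag_len w + size (unpair w).2) (unpair w).1 (unpair w).2 (run M [:: (unpair w).1; (unpair w).2] t).
  by rewrite HT run_sim_machine // (run_halted Hh Htk).
split; first by rewrite /halts_within Erun.
rewrite /accepts_within Erun /pair_language /=; apply/idP/eqP; by move/Ha.
Qed.

(* Hardwiring a prefix pre into a circuit C on |pre| + n inputs gives a circuit
   on n inputs with |C| + 6 vertices: a gadget builds the constants true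
   (vertex 2) and false (vertex 3) from input 0, each input j < |pre| of C is
   replaced by a NOT of the opposite constant, and two tail gates
   (AND with true, OR with false) give the constants a child so that the sink
   stays unique. *)
Definition const_gadget : circuit := [:: GIn 0; GNot 0; GOr 0 1; GNot 2].

Definition fix_gate (pre : seq bool) (g : gate) : gate :=
  match g with
  | GIn j => if j < size pre then GNot (if nth false pre j then 3 else 2) else GIn (j - size pre)
  | GAnd a b => GAnd a.+4 b.+4
  | GOr a b => GOr a.+4 b.+4
  | GNot a => GNot a.+4
  end.

Definition sink_tail (C : circuit) : circuit := [:: GAnd (size C).+3 2; GOr (size C).+4 3].

Definition hardwire (pre : seq bool) (C : circuit) : circuit :=
  const_gadget ++ (map (fix_gate pre) C ++ sink_tail C).

Lemma size_hardwire pre C : size (hardwire pre C) = (size C + 6)%N.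
Proof. by rewrite /hardwire !size_cat size_map /=; lia. Qed.

Definition eval_step (x : seq bool) (vals : seq bool) (g : gate) : seq bool :=
  rcons vals (eval_gate x vals g).

Lemma size_foldl_eval x vals C : size (foldl (eval_step x) vals C) = (size vals + size C)%N.
Proof. by elim: C vals => [|g C IH] vals /=; rewrite ?addn0 // IH size_rcons addSnnS. Qed.

(* Values of the gadget vertices on input x (locked to keep them folded). *)
Fact gadget_values_key : unit. Proof. exact: tt. Qed.
Definition gadget_values (x : seq bool) : seq bool :=
  locked_with gadget_values_key [:: nth false x 0; ~~ nth false x 0; true; false].

Lemma eval_fix_gate pre x vals g :
  eval_gate x (gadget_values x ++ vals) (fix_gate pre g) = eval_gate (pre ++ x) vals g.
Proof.
rewrite /gadget_values unlock; case: g => [j|a b|a b|a] //=.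
by case: ifP => Hj /=; rewrite nth_cat Hj //; case: (nth false pre j).
Qed.

Lemma foldl_fix_gate pre x C vals :
  foldl (eval_step x) (gadget_values x ++ vals) (map (fix_gate pre) C) =
  gadget_values x ++ foldl (eval_step (pre ++ x)) vals C.
Proof. by elim: C vals => [|g C IH] vals //=; rewrite /eval_step rcons_cat eval_fix_gate -IH. Qed.

Lemma eval_hardwire pre x C : 0 < size C ->
  eval_circuit (hardwire pre C) x = eval_circuit C (pre ++ x).
Proof.
move=> HC; rewrite /eval_circuit /eval_all /hardwire foldl_cat /= orbN.
rewrite foldl_cat (_ : [:: _; _; _; _] = gadget_values x ++ [::]); last by rewrite /gadget_values unlock.
rewrite (foldl_fix_gate pre x C [::]) /= /eval_step.
set V := foldl _ [::] C.
have HV : size V = size C by rewrite /V size_foldl_eval.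
have Hg : size (gadget_values x) = 4 by rewrite /gadget_values unlock.
have HS : size (gadget_values x ++ V) = (size C).+4 by rewrite size_cat Hg HV; lia.
rewrite !last_rcons !nth_rcons HS ltnn eqxx (_ : 3 < (size C).+4) //.
rewrite !nth_cat Hg /= (_ : (size C).+3 < 4 = false); last by case: (size C) HC.
rewrite /gadget_values unlock /= andbT orbF (last_nth false) HV.
by case: (size C) HC => // n _; rewrite (_ : n.+4 - 4 = n) //; lia.
Qed.

Lemma nth_hardwire_mid pre C k : k < size C ->
  nth (GIn 0) (hardwire pre C) k.+4 = fix_gate pre (nth (GIn 0) C k).
Proof.
move=> Hk; rewrite /hardwire nth_cat /= nth_cat size_map (_ : k.+4 - 4 = k); last lia.
by rewrite Hk (nth_map (GIn 0)).
Qed.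

Lemma nth_hardwire_tail1 pre C : nth (GIn 0) (hardwire pre C) (size C).+4 = GAnd (size C).+3 2.
Proof. by rewrite /hardwire nth_cat /= nth_cat size_map (_ : (size C).+4 - 4 = size C) ?ltnn ?subnn //; lia. Qed.

Lemma nth_hardwire_tail2 pre C : nth (GIn 0) (hardwire pre C) (size C).+4.+1 = GOr (size C).+4 3.
Proof.
rewrite /hardwire nth_cat /= nth_cat size_map (_ : (size C).+4.+1 - 4 = (size C).+1); last lia.
by rewrite ltnNge leqnSn /= subSnn.
Qed.

Lemma parents_fix_gate pre g k : k \in parents g -> k.+4 \in parents (fix_gate pre g).
Proof. by case: g => [j|a b|a b|a] //=; rewrite !inE ?eqSS. Qed.

(* Hardwiring preserves well-formedness (input 0 must exist for the gadget). *)
Lemma wf_hardwire n pre C : 0 < n -> wf_circuit (size pre + n) C -> wf_circuit n (hardwire pre C).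
Proof.
move=> Hn [HC0 [Hlab Hsink]]; rewrite /wf_circuit size_hardwire; split; first by lia.
split=> i Hi.
- case: i Hi => [|[|[|[|k]]]] Hi //; case: (ltngtP k (size C)) => Hk.
  + rewrite nth_hardwire_mid //; move: (Hlab k Hk).
    case: (nth (GIn 0) C k) => [j|a b|a b|a] /=; rewrite ?ltnS ?eqSS //.
    by case: ifP => [_|/negbT]; [case: ifP | rewrite -leqNgt; lia].
  + by rewrite (_ : k = (size C).+1) ?nth_hardwire_tail2 /=; lia.
  + by rewrite Hk nth_hardwire_tail1 /=; lia.
- case: i Hi => [|[|[|[|k]]]] Hi; [by exists 1 | by exists 2 | | |].
  + by exists (size C).+4; rewrite nth_hardwire_tail1 /= !inE eqxx orbT; split => //; lia.
  + by exists (size C).+4.+1; rewrite nth_hardwire_tail2 /= !inE eqxx orbT; split => //; lia.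
  + case: (ltngtP k.+1 (size C)) => Hk.
    * have [j [/andP [Hkj Hjs] Hpar]] := Hsink k Hk.
      exists j.+4; rewrite nth_hardwire_mid //; split; [lia | exact: parents_fix_gate].
    * by exists (size C).+4.+1; rewrite nth_hardwire_tail2 /= !inE (_ : k = size C) ?eqxx; [split=> //; lia | lia].
    * by exists (size C).+4; rewrite nth_hardwire_tail1 /= -Hk !inE eqxx; split => //; lia.
Qed.

Lemma hardwire_computes (L : language) n (f : Hn n) (pre : seq bool) C : 0 < n ->
  circ_computes C (@restrict L (size pre + n)) -> (forall x : n.-tuple bool, L (pre ++ x) = f x) ->
  circ_computes (hardwire pre C) f.
Proof.
move=> Hn [Hwf HC] Hf; split; first exact: wf_hardwire.
move=> x; rewrite eval_hardwire; last by case: Hwf.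
by rewrite (HC (cat_tuple (in_tuple pre) x)) -Hf.
Qed.

Lemma circ_enc_len_le s n : 1 <= s ->
  circ_enc_len s n <= s * (5 + 5 * up_log 2 (s + n)).
Proof.
move=> Hs; rewrite /circ_enc_len.
have Hn : up_log 2 n <= up_log 2 (s + n) by apply: leq_up_log; lia.
have Hs' : up_log 2 s <= up_log 2 (s + n) by apply: leq_up_log; lia.
have Hm : maxn (2 * up_log 2 s) (up_log 2 n) <= 3 * up_log 2 (s + n) by rewrite geq_max; lia.
nia.
Qed.

Open Scope R_scope.

Lemma INR_addn m n : INR (m + n)%N = INR m + INR n.
Proof. by rewrite -plus_INR. Qed.
Lemma INR_muln m n : INR (m * n)%N = INR m * INR n.
Proof. by rewrite -mult_INR. Qed.
Lemma INR_expn m n : INR (m ^ n)%N = INR m ^ n.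
Proof. by rewrite -pow_INR; congr INR; elim: n => //= n IH; rewrite expnS IH. Qed.
Lemma INR_leq m n : (m <= n)%N -> INR m <= INR n.
Proof. by move/leP; apply: le_INR. Qed.
Lemma INR_ge1 n : (1 <= n)%N -> 1 <= INR n.
Proof. exact: INR_leq. Qed.

Lemma Rpower_pos x y : 0 < Rpower x y.
Proof. exact: exp_pos. Qed.

Lemma Rpower_ge1 x y : 1 <= x -> 0 <= y -> 1 <= Rpower x y.
Proof. by move=> Hx Hy; rewrite -(Rpower_O x); [apply: Rle_Rpower | lra]. Qed.

Lemma ln_le_Rpower y e : 0 < y -> 0 < e -> ln y <= Rpower y e / e.
Proof.
move=> Hy He; have := exp_ineq1_le (e * ln y); rewrite -/(Rpower y e) => H.
apply: (Rmult_le_reg_l e) => //; rewrite /Rdiv (Rmult_comm (Rpower y e)) -Rmult_assoc Rinv_r; lra.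
Qed.

Lemma up_log_le_Rpower eps : 0 < eps ->
  exists C, 1 <= C /\ forall y, (1 <= y)%N -> INR (up_log 2 y) <= C * Rpower (INR y) eps.
Proof.
move=> He; have Hl2 : 0 < ln 2 by have := ln_lt_2; lra.
have Hi : 0 < / (eps * ln 2) by apply: Rinv_0_lt_compat; nra.
exists (1 + / (eps * ln 2)); split; first lra.
move=> y Hy; have HR : 1 <= Rpower (INR y) eps by apply: Rpower_ge1; [exact: INR_ge1 | lra].
case: (ltngtP y 1) => Hy1; first by lia.
- set k := up_log 2 y.
  have Hk : (0 < k)%N by rewrite /k up_log_gt0.
  have Hyk : INR 2 ^ k.-1 < INR y by rewrite -INR_expn; apply/lt_INR/ltP/up_log_gtn.
  have Hy0 : 0 < INR y by have := INR_leq (ltnW Hy1); simpl; lra.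
  have Hln : INR k.-1 * ln 2 < ln (INR y).
    by rewrite -ln_pow /=; [apply: ln_increasing => //; apply: pow_lt | ]; simpl; lra.
  have := ln_le_Rpower Hy0 He.
  have Ek : INR k = INR k.-1 + 1 by rewrite -{1}(prednK Hk) S_INR.
  have E : Rpower (INR y) eps / eps = Rpower (INR y) eps * / (eps * ln 2) * ln 2 by field; lra.
  rewrite Ek E => Hle; have : INR k.-1 <= Rpower (INR y) eps * / (eps * ln 2) by nra.
  nra.
- by rewrite Hy1 up_log1 /=; apply: Rmult_le_pos; [lra | apply: Rlt_le; apply: Rpower_pos].
Qed.

Lemma circ_enc_len_Rbound eps : 0 < eps ->
  exists C, 0 < C /\ forall s n, (1 <= s)%N ->
    INR (circ_enc_len s n) <= C * INR s * Rpower (INR (s + n)) eps.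
Proof.
move=> He; have [C1 [HC1 Hlog]] := up_log_le_Rpower He.
exists (5 + 5 * C1); split=> [|s n Hs]; first lra.
set P := Rpower (INR (s + n)) eps.
have HP : 1 <= P by apply: Rpower_ge1; [apply: INR_ge1; lia | lra].
have HL := Hlog (s + n)%N (ltac:(lia)); rewrite -/P in HL.
have Hs1 := INR_ge1 Hs.
apply: (Rle_trans _ _ _ (INR_leq (circ_enc_len_le n Hs))).
rewrite INR_muln INR_addn INR_muln (_ : INR 5 = 5); last by simpl; lra.
have : 5 + 5 * INR (up_log 2 (s + n)) <= (5 + 5 * C1) * P by nra.
nra.
Qed.

Lemma circ_enc_len_power tau A : 0 < tau -> tau <= 1 -> 1 <= A ->
  exists C, 0 < C /\ forall s n m, (1 <= s)%N -> (n <= m)%N -> (1 <= m)%N ->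
    INR s <= A * Rpower (INR m) (1 + tau) ->
    INR (circ_enc_len s n) <= C * Rpower (INR m) (1 + 3 * tau).
Proof.
move=> Ht0 Ht1 HA; have [C0 [HC0 Henc]] := circ_enc_len_Rbound Ht0.
exists (C0 * A * (A + 1)); split=> [|s n m Hs Hnm Hm Hsm]; first by nra.
set X := INR m; have HX : 1 <= X by exact: INR_ge1.
set P := Rpower X (1 + tau); change (INR s <= A * P) in Hsm.
have HXP : X <= P by rewrite -{1}(Rpower_1 X) /P; [apply: Rle_Rpower | ]; lra.
have HsnP : INR (s + n) <= (A + 1) * P.
  by rewrite INR_addn Rmult_plus_distr_r Rmult_1_l; have := INR_leq Hnm; rewrite -/X; lra.
have Hpow : Rpower (INR (s + n)) tau <= (A + 1) * Rpower X (2 * tau).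
  have Hsn0 : 0 < INR (s + n) by apply: lt_0_INR; apply/ltP; lia.
  apply: (Rle_trans _ (Rpower ((A + 1) * P) tau)); first by apply: Rle_Rpower_l; lra.
  rewrite -Rpower_mult_distr /P ?Rpower_mult; [|lra|exact: Rpower_pos].
  apply: Rmult_le_compat; try (apply: Rlt_le; apply: Rpower_pos).
  - by rewrite -{2}(Rpower_1 (A + 1)); [apply: Rle_Rpower | ]; lra.
  - by apply: Rle_Rpower; nra.
have E : Rpower X (1 + 3 * tau) = P * Rpower X (2 * tau) by rewrite /P -Rpower_plus; congr Rpower; lra.
rewrite E; apply: (Rle_trans _ _ _ (Henc s n Hs)).
rewrite (_ : C0 * A * (A + 1) * (P * _) = C0 * (A * P) * ((A + 1) * Rpower X (2 * tau))); last by ring.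
apply: Rmult_le_compat => //.
- by apply: Rmult_le_pos; [lra | apply: pos_INR].
- by apply: Rlt_le; apply: Rpower_pos.
- by apply: Rmult_le_compat_l; lra.
Qed.

Lemma pair_length_power n ku d delta : (1 <= n)%N -> (1 <= ku)%N -> (ku <= n ^ d)%N -> 0 <= delta ->
  Rpower (INR (ku.*2 + 1 + n)) (1 + delta) <=
  Rpower 4 (1 + delta) * INR ku * Rpower (INR n) (1 + (INR d + 1) * delta).
Proof.
move=> Hn Hku Hkun Hd.
have Hn1 := INR_ge1 Hn; have Hku1 := INR_ge1 Hku.
have Hm : INR (ku.*2 + 1 + n) <= 4 * (INR ku * INR n).
  by rewrite -INR_muln (_ : 4 = INR 4) -?INR_muln; [apply: INR_leq; nia | simpl; lra].
have Hkn : INR ku * INR n <= INR n ^ d.+1.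
  by rewrite -INR_muln -INR_expn; apply: INR_leq; rewrite expnSr leq_mul2r; apply/orP; right.
apply: (Rle_trans _ (Rpower (4 * (INR ku * INR n)) (1 + delta))).
  by apply: Rle_Rpower_l; [lra | split; [apply: lt_0_INR; apply/ltP; lia | exact: Hm]].
rewrite -Rpower_mult_distr; [|lra|nra].
rewrite Rmult_assoc; apply: Rmult_le_compat_l; first exact: Rlt_le (Rpower_pos _ _).
rewrite Rpower_plus Rpower_1; last nra.
rewrite Rpower_plus Rpower_1; last lra.
rewrite !Rmult_assoc; do 2 (apply: Rmult_le_compat_l; first lra).
apply: (Rle_trans _ (Rpower (INR n ^ d.+1) delta)); first by apply: Rle_Rpower_l; [lra | nra].
rewrite -Rpower_pow ?Rpower_mult ?S_INR; [by right | lra].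
Qed.

(* The circuit-size exponent used in the contrapositive: with
   tau = min(g,1) / (3(d+1)) one has 3 tau <= 1 and 3 tau (d+1) <= g. *)
Definition size_exponent (g : R) (d : nat) : R := Rmin g 1 / (3 * (INR d + 1)).

Lemma size_exponent_bounds g d : 0 < g ->
  [/\ 0 < size_exponent g d, size_exponent g d <= 1 & (INR d + 1) * (3 * size_exponent g d) <= g].
Proof.
move=> Hg; have Hd := pos_INR d; have Hm1 := Rmin_r g 1; have Hmg := Rmin_l g 1.
have Hm0 : 0 < Rmin g 1 by apply: Rmin_glb_lt; lra.
have E : (INR d + 1) * (3 * size_exponent g d) = Rmin g 1 by rewrite /size_exponent; field; lra.
split; last lra.
- by apply: Rdiv_lt_0_compat; lra.
- have : 3 * size_exponent g d <= Rmin g 1 by rewrite -E; nra.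
  lra.
Qed.

Lemma hardwired_ratio_bound g d K0 : 0 < g ->
  exists K, forall n ku s kc, (1 <= n)%N -> (1 <= ku)%N -> (ku <= n ^ d)%N ->
    INR s <= K0 * Rpower (INR (ku.*2 + 1 + n)) (1 + size_exponent g d) ->
    (kc <= circ_enc_len (s + 6) n)%N ->
    INR kc / INR ku <= K * Rpower (INR n) (1 + g).
Proof.
move=> Hg; have [Ht0 Ht1 Htg] := size_exponent_bounds d Hg; set tau := size_exponent g d in Ht0 Ht1 Htg *.
have [C [HC Henc]] := @circ_enc_len_power tau (Rabs K0 + 6) Ht0 Ht1 (ltac:(have := Rabs_pos K0; lra)).
exists (C * Rpower 4 (1 + 3 * tau)) => n ku s kc Hn Hku Hkun Hs Hkc.
set m := (ku.*2 + 1 + n)%N; change (INR s <= K0 * Rpower (INR m) (1 + tau)) in Hs.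
have HP : 1 <= Rpower (INR m) (1 + tau) by apply: Rpower_ge1; [apply: INR_ge1; rewrite /m; lia | lra].
have Hs6 : INR (s + 6) <= (Rabs K0 + 6) * Rpower (INR m) (1 + tau).
  rewrite INR_addn (_ : INR 6 = 6); last by simpl; lra.
  have : K0 * Rpower (INR m) (1 + tau) <= Rabs K0 * Rpower (INR m) (1 + tau).
    by apply: Rmult_le_compat_r; [lra | apply: Rle_abs].
  rewrite Rmult_plus_distr_r; lra.
have Hnm : (n <= m)%N by rewrite /m; lia.
have Hkc1 := Rle_trans _ _ _ (INR_leq Hkc) (Henc _ n m (ltn_addl s (isT : (0 < 6)%N)) Hnm (leq_trans Hn Hnm) Hs6).
have Hm := pair_length_power Hn Hku Hkun (ltac:(lra) : 0 <= 3 * tau).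
have Hng : Rpower (INR n) (1 + (INR d + 1) * (3 * tau)) <= Rpower (INR n) (1 + g).
  by apply: Rle_Rpower; [exact: INR_ge1 | lra].
have Hku1 := INR_ge1 Hku; have H4 := Rpower_pos 4 (1 + 3 * tau).
apply: (Rmult_le_reg_r (INR ku)); first lra.
rewrite /Rdiv Rmult_assoc Rinv_l ?Rmult_1_r; last lra.
apply: (Rle_trans _ _ _ Hkc1); rewrite -/m.
rewrite (_ : C * Rpower 4 (1 + 3 * tau) * Rpower (INR n) (1 + g) * INR ku =
             C * (Rpower 4 (1 + 3 * tau) * INR ku * Rpower (INR n) (1 + g))); last by ring.
apply: Rmult_le_compat_l; first lra.
apply: (Rle_trans _ _ _ Hm); apply: Rmult_le_compat_l => //; nra.
Qed.

Close Scope R_scope.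

Lemma pair_language_prog (U : interp) n (f : Hn n) hp :
  prog_for U f hp -> forall x : n.-tuple bool, pair_language U (pair_prefix hp ++ x) = f x.
Proof. by move=> Hprog x; rewrite /pair_language unpair_prefix /= Hprog; case: (f x). Qed.

(* Programs of a universal interpreter are nonempty: the empty string is not of
   the form E(T)u. *)
Lemma prog_nonempty E c (U : interp) n (f : Hn n) hp :
  machine_encoding E -> universal_interp E c U -> prog_for U f hp -> (0 < size hp)%N.
Proof.
move=> [HE _] [HUnone _] Hprog; case: hp Hprog => // Hprog.
have := Hprog [tuple of nseq n false]; rewrite HUnone // => T u _ Heq.
by have := f_equal size Heq; rewrite size_cat /=; have := HE T; lia.
Qed.

Lemma ratio_bigO_of_small_circuits E c (U : interp) d g (C : nat -> circuit) :
  machine_encoding E -> universal_interp E c U -> Rlt R0 g ->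
  (forall n, 0 < n -> @circ_computes n (C n) (@restrict (pair_language U) n)) ->
  sizes_bigO C (size_exponent g d) -> ratio_sup_bigO U d g.
Proof.
move=> HE HU Hg HC [K0 [N0 HK]]; have [K Hratio] := hardwired_ratio_bound d K0 Hg.
exists K, (maxn N0 1) => n Hn Hn0 f ku kc [[hp [<- Hprog]] _] Hku [_ Hmin].
set m := size (pair_prefix hp) + n.
have Hm : 0 < m by rewrite /m; lia.
have Hcomp : circ_computes (hardwire (pair_prefix hp) (C m)) f.
  exact: hardwire_computes Hn0 (HC m Hm) (pair_language_prog Hprog).
have Hkc := Hmin _ Hcomp; rewrite /circ_size size_hardwire in Hkc.
have Hsize := HK m (leq_trans (leq_trans (leq_maxl N0 1) Hn) (leq_addl _ _)).
rewrite /m size_pair_prefix in Hsize Hkc.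
exact: Hratio n (size hp) (size (C _)) kc Hn0 (prog_nonempty HE HU Hprog) Hku Hsize Hkc.
Qed.

Theorem mainTheorem13 :
  forall (E : TM -> seq bool) (U : nat -> interp),
    machine_encoding E ->
    (forall c, 0 < c -> universal_interp E c (U c)) ->
    (exists (c d : nat) (gamma : R),
        0 < c /\ 0 < d /\ Rlt R0 gamma /\ ~ ratio_sup_bigO (U c) d gamma) ->
    exists L : language, inP L /\
      exists tau : R, Rlt R0 tau /\
        ~ (exists C : nat -> circuit,
              (forall n, 0 < n -> @circ_computes n (C n) (@restrict L n)) /\
              sizes_bigO C tau).
Proof.
move=> E U HE HU [c [d [g [Hc [_ [Hg Hnot]]]]]].
have HUc := HU c Hc; have [_ [_ [M [HMin [HMwork [beta HM]]]]]] := HUc.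
exists (pair_language (U c)); split; first exact: pair_language_inP HMin HMwork Hc HM.
exists (size_exponent g d); split; first by case: (size_exponent_bounds d Hg).
move=> [C [HC Hsize]]; apply: Hnot.
exact: ratio_bigO_of_small_circuits HE HUc Hg HC Hsize.
Qed.
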